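(* Let $(\mathbf{A},E,D)$ be a scheme on $P$ compute nodes with gradient dimension $d\ge1$. If $(\mathbf{A},E,D)$ tolerates $s$ adversarial nodes, then $s\le \frac{P-1}{2}$.
   Context: Fix integers $P\ge 1$ (number of compute nodes) and $d\ge 1$. A scheme is a triple $(\mathbf{A},E,D)$ where $\mathbf{A}\in\{0,1\}^{P\times P}$ is an allocation matrix ($\mathbf{A}_{j,k}=1$ means node $j$ is assigned gradient $k$), $E=(E_1,\dots,E_P)$ with each $E_j:\mathbb{R}^{d\times P}\to\mathbb{R}^d$ an arbitrary function (encoder of node $j$), and $D:\mathbb{R}^{d\times P}\to\mathbb{R}^d$ an arbitrary function (decoder). For $\mathbf{G}=[\mathbf{g}_1,\dots,\mathbf{g}_P]\in\mathbb{R}^{d\times P}$, let $\mathbf{Y}_j=(\mathbf{1}_d\mathbf{A}_{j,\cdot})\odot\mathbf{G}$ (the $d\times P$ matrix whose $k$-th column is $\mathbf{g}_k$ if $\mathbf{A}_{j,k}=1$ and $\mathbf{0}_d$ otherwise), $\mathbf{z}_j=E_j(\mathbf{Y}_j)$, and $\mathbf{Z}^{\mathbf{A},E,\mathbf{G}}=[\mathbf{z}_1,\dots,\mathbf{z}_P]$. The scheme tolerates $s$ adversarial nodes if for every $\mathbf{G}\in\mathbb{R}^{d\times P}$ and every $\mathbf{N}\in\mathbb{R}^{d\times P}$ with at most $s$ nonzero columns, $D(\mathbf{Z}^{\mathbf{A},E,\mathbf{G}}+\mathbf{N})=\mathbf{G}\mathbf{1}_P$. *)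

From mathcomp Require Import all_boot.
From Stdlib Require Import Reals.
Set Implicit Arguments. Unset Strict Implicit. Unset Printing Implicit Defensive.

(* A d x P real matrix, represented column-wise: M k is the k-th column in R^d. *)
Definition vec (d : nat) := 'I_d -> R.
Definition mat (d P : nat) := 'I_P -> vec d.

Definition zero_vec (d : nat) : vec d := fun _ => 0%R.

(* Allocation matrix A in {0,1}^{P x P}: A j k = true means node j gets gradient k. *)
Definition alloc (P : nat) := 'I_P -> 'I_P -> bool.

Definition encoders (d P : nat) := 'I_P -> (mat d P -> vec d).
Definition decoder (d P : nat) := mat d P -> vec d.

Definition Ymat d P (A : alloc P) (G : mat d P) (j : 'I_P) : mat d P :=
  fun k => if A j k then G k else @zero_vec d.

Definition Zmat d P (A : alloc P) (E : encoders d P) (G : mat d P) : mat d P :=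
  fun j => E j (Ymat A G j).

Definition mat_add d P (M N : mat d P) : mat d P := fun k i => (M k i + N k i)%R.

Definition col_sum d P (G : mat d P) : vec d :=
  fun i => \big[Rplus/0%R]_(k < P) G k i.

Definition at_most_nonzero_cols d P (N : mat d P) (s : nat) : Prop :=
  exists S : {set 'I_P}, #|S| <= s /\ (forall k, k \notin S -> forall i, N k i = 0%R).

Definition tolerates d P (A : alloc P) (E : encoders d P) (D : decoder d P) (s : nat) : Prop :=
  forall (G N : mat d P), at_most_nonzero_cols N s ->
    D (mat_add (Zmat A E G) N) = col_sum G.

(* If [2 s >= P], the columns split into two sets [S] and [~: S] of at most [s]
   nodes each.  An adversary controlling [S] can make the received matrix for
   the all-zero gradients look exactly like an adversary controlling [~: S]
   makes it for the all-one gradients: both produce the matrix that agrees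
   with [Z(0)] off [S] and with [Z(1)] on [S].  The decoder then cannot
   return both [0] and [P > 0]. *)
From mathcomp Require Import all_boot.
From Stdlib Require Import Reals Lra FunctionalExtensionality.
From mathcomp Require Import zify.

Set Implicit Arguments.
Unset Strict Implicit.

Lemma card_ord_interval (n a b : nat) :
  #|[set k : 'I_n | a <= k < b]| <= b - a.
Proof.
rewrite cardE -(size_map val) -(size_iota a (b - a)).
apply: uniq_leq_size; first by rewrite map_inj_uniq ?enum_uniq //; exact: val_inj.
move=> x /mapP[k]; rewrite mem_enum inE => /andP[ak kb] ->.
by rewrite mem_iota ak /=; lia.
Qed.

Lemma exists_halving_set (n s : nat) :
  n <= 2 * s -> exists S : {set 'I_n}, #|S| <= s /\ #|~: S| <= s.
Proof.
move=> ns; exists [set k : 'I_n | 0 <= k < s]; split.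
  by rewrite (leq_trans (card_ord_interval _ _ _)) ?subn0.
have sub : ~: [set k : 'I_n | 0 <= k < s] \subset [set k : 'I_n | s <= k < n].
  by apply/subsetP => k; rewrite !inE /= ltn_ord -leqNgt andbT.
by rewrite (leq_trans (subset_leq_card sub)) // (leq_trans (card_ord_interval _ _ _)) //; lia.
Qed.

Lemma big_Rplus_const (n : nat) (c : R) : \big[Rplus/0%R]_(k < n) c = (INR n * c)%R.
Proof.
rewrite big_const_ord; elim: n => [|n IH]; first by rewrite /=; lra.
by rewrite iterS IH S_INR; lra.
Qed.

Section Tolerance.

Variables (d P : nat) (A : alloc P) (E : encoders d P) (D : decoder d P) (s : nat).
Hypothesis tol : tolerates A E D s.

Definition patch (S : {set 'I_P}) (M M' : mat d P) : mat d P :=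
  fun k => if k \in S then M' k else M k.

Lemma patchC (S : {set 'I_P}) (M M' : mat d P) : patch S M M' = patch (~: S) M' M.
Proof. by apply: functional_extensionality => k; rewrite /patch inE; case: (k \in S). Qed.

Lemma tolerates_patch (S : {set 'I_P}) (G : mat d P) (M' : mat d P) :
  #|S| <= s -> D (patch S (Zmat A E G) M') = col_sum G.
Proof.
move=> cardS; set Z := Zmat A E G.
set N : mat d P := fun k i => if k \in S then (M' k i - Z k i)%R else 0%R.
have -> : patch S Z M' = mat_add Z N.
  apply: functional_extensionality => k; apply: functional_extensionality => i.
  by rewrite /patch /mat_add /N; case: (k \in S); lra.
by apply: tol; exists S; split=> // k /negbTE kS i; rewrite /N kS.
Qed.

Lemma tolerates_col_sum_eq (S : {set 'I_P}) (G G' : mat d P) :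
  #|S| <= s -> #|~: S| <= s -> col_sum G = col_sum G'.
Proof.
move=> cardS cardCS.
rewrite -(tolerates_patch G (Zmat A E G') cardS) patchC.
exact: tolerates_patch.
Qed.

End Tolerance.

Theorem mainTheorem2 (P d : nat) (hP : 1 <= P) (hd : 1 <= d)
  (A : alloc P) (E : encoders d P) (D : decoder d P) (s : nat) :
  tolerates A E D s -> (2 * s <= P - 1)%N.
Proof.
move=> tol; rewrite leqNgt; apply/negP => Ps.
have [S [cardS cardCS]] : exists S : {set 'I_P}, #|S| <= s /\ #|~: S| <= s.
  by apply: exists_halving_set; lia.
have := congr1 (fun v => v (Ordinal hd))
  (tolerates_col_sum_eq tol (fun _ _ => 0%R) (fun _ _ => 1%R) cardS cardCS).
rewrite /col_sum !big_Rplus_const.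
have : (0 < INR P)%R by apply: lt_0_INR; apply/ltP.
lra.
Qed.
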